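(* Let $X$ be a nontrivial real Hausdorff locally convex space, let $g\in\Gamma(X)$ be sublinear and let $x^{\ast}\in X^{\ast}$. Set $L_{x^{\ast}}:=\{x\in X: g(x)=\langle x,x^{\ast}\rangle,\ g(-x)=-\langle x,x^{\ast}\rangle\}$. The following assertions are equivalent: (a) $x^{\ast}\in\operatorname{qri}\partial g(0)$; (b) $[g\le x^{\ast}]$ is a linear space; (b') $L_{x^{\ast}}=[g\le x^{\ast}]$; (c) $x^{\ast}\in\partial g(0)$ and $[g=x^{\ast}]$ is a linear space; (c') $x^{\ast}\in\partial g(0)$ and $L_{x^{\ast}}=[g=x^{\ast}]$.
   Context: $X^{\ast}$ is the topological dual of $X$ endowed with the weak$^{\ast}$ topology; closures in $X^{\ast}$ are weak$^{\ast}$ closures; $\langle x,x^{\ast}\rangle:=x^{\ast}(x)$. $\Gamma(X)$ is the set of proper lower semicontinuous convex functions $X\to\mathbb{R}\cup\{\pm\infty\}$. $\partial g(0)=\{x^{\ast}:\langle x',x^{\ast}\rangle\le g(x')\ \forall x'\in X\}$. $[g\le x^{\ast}]:=\{x\in X: g(x)\le\langle x,x^{\ast}\rangle\}$, $[g=x^{\ast}]:=\{x\in X: g(x)=\langle x,x^{\ast}\rangle\}$. For convex $B\subset X^{\ast}$, $\operatorname{qri}B=\{b\in B:\overline{\mathbb{R}_+(B-b)}\text{ is a linear subspace}\}$. *)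

From HB Require Import structures.
From mathcomp Require Import all_boot all_order all_algebra.
From mathcomp Require Import all_classical all_reals all_analysis.
Set Implicit Arguments. Unset Strict Implicit. Unset Printing Implicit Defensive.
Import Order.TTheory GRing.Theory Num.Theory numFieldTopology.Exports numFieldNormedType.Exports.
Local Open Scope classical_set_scope.
Local Open Scope ring_scope.

Section Defs.
Context {R : realType} {X : tvsType R}.

Definition cont_dual : set (X -> R) :=
  [set f | (forall (a : R) (x y : X), f (a *: x + y) = a * f x + f y)
           /\ forall x : X, continuous_at x f].

(* weak-star closure in X^* : closure for the topology of pointwise
   convergence on X (the weak* topology is the trace of it on X^* ) *)
Definition wstar_closure (S : set (X -> R)) : set (X -> R) :=
  [set f | cont_dual f /\ @closure {ptws X -> R} S f].

Definition dual_linear_subspace (S : set (X -> R)) : Prop :=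
  [/\ S (fun _ => 0),
      (forall f h, S f -> S h -> S (fun x => f x + h x)) &
      (forall (a : R) f, S f -> S (fun x => a * f x))].

Definition is_linear_subspace (S : set X) : Prop :=
  [/\ S 0, (forall x y, S x -> S y -> S (x + y)) &
      (forall (a : R) x, S x -> S (a *: x))].

Definition cone_at (B : set (X -> R)) (b : X -> R) : set (X -> R) :=
  [set f | exists t : R, 0 <= t /\
     exists2 c, B c & f = (fun x => t * (c x - b x))].

Definition qri (B : set (X -> R)) : set (X -> R) :=
  [set b | B b /\ dual_linear_subspace (wstar_closure (cone_at B b))].

Local Open Scope ereal_scope.

Definition proper_fun (g : X -> \bar R) : Prop :=
  (forall x, g x != -oo) /\ (exists x, g x != +oo).

Definition econvex (g : X -> \bar R) : Prop :=
  forall (t : R) (x y : X), (0 < t < 1)%R ->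
    g ((t *: x + (1 - t) *: y)%R) <= t%:E * g x + (1 - t)%:E * g y.

Definition esublinear (g : X -> \bar R) : Prop :=
  (forall (t : R) x, (0 < t)%R -> g ((t *: x)%R) = t%:E * g x) /\
  (forall x y, g ((x + y)%R) <= g x + g y).

Definition subdiff0 (g : X -> \bar R) : set (X -> R) :=
  [set f | cont_dual f /\ forall x, (f x)%:E <= g x].

Definition g_le_set (g : X -> \bar R) (f : X -> R) : set X :=
  [set x | g x <= (f x)%:E].
Definition g_eq_set (g : X -> \bar R) (f : X -> R) : set X :=
  [set x | g x = (f x)%:E].
Definition Lset (g : X -> \bar R) (f : X -> R) : set X :=
  [set x | g x = (f x)%:E /\ g ((- x)%R) = (- f x)%:E].

End Defs.

(* Every lower semicontinuous sublinear g is the supremum of its continuous linear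
   minorants, i.e. of the subdifferential S = dg(0): Hahn-Banach (via Zorn: a minimal
   sublinear minorant is linear) applied to the inf-convolution of g with a multiple of the
   gauge of a convex neighbourhood of 0, which is bounded above near 0 and hence has only
   continuous linear minorants. Consequently [g <= xs] is the polar of the cone
   R_+ (S - xs), and by a separation in finitely many coordinates the weak* closure of
   this cone is the polar of [g <= xs]. That closure is a linear subspace iff the convex
   cone [g <= xs] is symmetric, i.e. a linear subspace; the other equivalences follow from
   L = [g <= xs] /\ - [g <= xs] and from [g <= xs] = [g = xs] when xs is in S. *)

From HB Require Import structures.
From mathcomp Require Import all_boot all_order all_algebra.
From mathcomp Require Import all_classical all_reals all_analysis.
From mathcomp Require Import ring lra.
Set Implicit Arguments. Unset Strict Implicit. Unset Printing Implicit Defensive.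
Import Order.TTheory GRing.Theory Num.Theory numFieldTopology.Exports numFieldNormedType.Exports.
Local Open Scope classical_set_scope.
Local Open Scope ring_scope.

Section ScalarFun.
Context {R : pzRingType} {V : lmodType R}.
Variables (f : V -> R) (hf : scalar f).

Let F : {scalar V} := HB.pack f (GRing.isLinear.Build R V R *%R f hf).

Lemma scalar_fun0 : f 0 = 0. Proof. exact: (linear0 F). Qed.
Lemma scalar_funN x : f (- x) = - f x. Proof. exact: (linearN F). Qed.
Lemma scalar_funD x y : f (x + y) = f x + f y. Proof. exact: (linearD F). Qed.
Lemma scalar_funZ a x : f (a *: x) = a * f x. Proof. exact: (GRing.scalarZ F). Qed.

Lemma scalar_fun_sum n (a : 'I_n -> R) (v : 'I_n -> V) :
  f (\sum_(i < n) a i *: v i) = \sum_(i < n) a i * f (v i).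
Proof.
by elim/big_rec2: _ => [|i y1 y2 _ <-]; rewrite ?scalar_fun0 ?scalar_funD ?scalar_funZ.
Qed.

End ScalarFun.

Section Sublinear.
Context {R : realType} {V : lmodType R}.

Definition sublinear (p : V -> R) :=
  (forall x y, p (x + y) <= p x + p y) /\ (forall t x, 0 < t -> p (t *: x) = t * p x).

Lemma sublinear0 p : sublinear p -> p 0 = 0.
Proof. by move=> [_ pZ]; have := pZ 2 0 (ltr0Sn _ 1); rewrite scaler0; lra. Qed.

Lemma sublinearZ p t x : sublinear p -> 0 <= t -> p (t *: x) = t * p x.
Proof.
move=> hp; rewrite le_eqVlt => /predU1P[<-|]; last exact: hp.2.
by rewrite scale0r mul0r sublinear0.
Qed.

Lemma sublinear_addN_ge0 p x : sublinear p -> 0 <= p x + p (- x).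
Proof. by move=> hp; rewrite -(sublinear0 hp) -(subrr x); apply: hp.1. Qed.

Lemma sublinear_inf (P : V -> set R) :
  (forall x, has_lbound (P x)) -> (forall x, P x !=set0) ->
  (forall x y a b, P x a -> P y b -> exists2 c, P (x + y) c & c <= a + b) ->
  (forall t x a, 0 < t -> P x a -> exists2 c, P (t *: x) c & c <= t * a) ->
  sublinear (fun x => inf (P x)).
Proof.
move=> Plb Pn0 PD PZ.
have infD x y a b : P x a -> P y b -> inf (P (x + y)) <= a + b.
  by move=> Pa Pb; have [c Pc] := PD _ _ _ _ Pa Pb; apply/le_trans/ge_inf.
have infZ t x a : 0 < t -> P x a -> inf (P (t *: x)) <= t * a.
  by move=> t0 Pa; have [c Pc] := PZ _ _ _ t0 Pa; apply/le_trans/ge_inf.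
split=> [x y|t x t0].
- rewrite -lerBlDr; apply: lb_le_inf => // a Pa.
  rewrite lerBlDr -lerBlDl; apply: lb_le_inf => // b Pb.
  by rewrite lerBlDl; exact: infD.
- apply/eqP; rewrite eq_le; apply/andP; split.
  + rewrite -ler_pdivrMl //; apply: lb_le_inf => // a Pa.
    by rewrite ler_pdivrMl //; exact: infZ.
  + apply: lb_le_inf => // b Pb; rewrite -ler_pdivlMl //.
    have ti0 : 0 < t^-1 by rewrite invr_gt0.
    have := infZ _ _ _ ti0 Pb.
    by rewrite scalerA mulVf ?gt_eqF // scale1r mulrC.
Qed.

Definition cone_shift (p : V -> R) (z x : V) :=
  inf [set p (x + s *: z) - s * p z | s in [set s : R | 0 <= s]].

Lemma cone_shift_lbound p z x : sublinear p ->
  has_lbound [set p (x + s *: z) - s * p z | s in [set s : R | 0 <= s]].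
Proof.
move=> hp; exists (- p (- x)) => _ [s /= s0 <-].
by have := hp.1 (x + s *: z) (- x); rewrite addrC addKr (sublinearZ z hp s0); lra.
Qed.

Lemma cone_shift_sublinear p z : sublinear p -> sublinear (cone_shift p z).
Proof.
move=> hp; apply: sublinear_inf => [x|x|x y _ _ [s1 s10 <-] [s2 s20 <-]|t x _ t0 [s s0 <-]].
- exact: cone_shift_lbound.
- exists (p x), 0; first exact: lexx.
  by rewrite scale0r addr0 mul0r subr0.
- exists (p (x + y + (s1 + s2) *: z) - (s1 + s2) * p z).
    by exists (s1 + s2) => //=; rewrite addr_ge0.
  have := hp.1 (x + s1 *: z) (y + s2 *: z).
  by rewrite addrACA -scalerDl mulrDl; lra.
- exists (p (t *: x + (t * s) *: z) - (t * s) * p z).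
    by exists (t * s) => //=; rewrite mulr_ge0 // ltW.
  by rewrite -scalerA -scalerDr hp.2 // -mulrA -mulrBr.
Qed.

Lemma cone_shift_le_at p z x s : sublinear p -> 0 <= s ->
  cone_shift p z x <= p (x + s *: z) - s * p z.
Proof. by move=> hp s0; apply: ge_inf; [exact: cone_shift_lbound | exists s]. Qed.

Lemma cone_shift_le p z x : sublinear p -> cone_shift p z x <= p x.
Proof.
by move=> hp; have := cone_shift_le_at z x hp (lexx 0); rewrite scale0r addr0 mul0r subr0.
Qed.

Lemma cone_shift_opp p z : sublinear p -> cone_shift p z (- z) <= - p z.
Proof.
move=> hp; have := cone_shift_le_at z (- z) hp ler01.
by rewrite scale1r addNr sublinear0 // mul1r sub0r.
Qed.

Lemma scalar_of_cone_shift_min f :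
  sublinear f -> (forall z x, f x <= cone_shift f z x) -> scalar f.
Proof.
move=> hf fmin.
have fN z : f (- z) = - f z.
  by have := fmin z (- z); have := cone_shift_opp z hf; have := sublinear_addN_ge0 z hf; lra.
have fD x y : f (x + y) = f x + f y.
  by have := hf.1 x y; have := hf.1 (- x) (- y); rewrite -opprD !fN; lra.
move=> a x y; rewrite fD; congr (_ + _).
have [a0|a0] := leP 0 a; first by rewrite (sublinearZ x hf a0).
have na0 : 0 <= - a by rewrite oppr_ge0 ltW.
by rewrite -[a]opprK scaleNr fN (sublinearZ x hf na0) opprK mulNr opprK.
Qed.

Lemma sublinear_chain_minorant (p : V -> R) (A : set (V -> R)) :
  A !=set0 -> (forall q, A q -> sublinear q /\ forall x, q x <= p x) ->
  (forall q1 q2, A q1 -> A q2 -> (forall x, q1 x <= q2 x) \/ (forall x, q2 x <= q1 x)) ->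
  exists2 m, sublinear m & forall q, A q -> forall x, m x <= q x.
Proof.
move=> [q0 Aq0] Ap Atot.
have Alb x : has_lbound [set q x | q in A].
  exists (- p (- x)) => _ [q Aq <-]; have [hq qp] := Ap q Aq.
  by have := sublinear_addN_ge0 x hq; have := qp (- x); lra.
exists (fun x => inf [set q x | q in A]); last first.
  by move=> q Aq x; apply: ge_inf => //; exists q.
apply: sublinear_inf => [//|x|x y _ _ [q1 A1 <-] [q2 A2 <-]|t x _ t0 [q Aq <-]].
- by exists (q0 x), q0.
- have [q12|q21] := Atot _ _ A1 A2.
  + exists (q1 (x + y)); first by exists q1.
    by have := (Ap q1 A1).1.1 x y; have := q12 y; lra.
  + exists (q2 (x + y)); first by exists q2.
    by have := (Ap q2 A2).1.1 x y; have := q21 x; lra.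
- exists (q (t *: x)); first by exists q.
  by rewrite (Ap q Aq).1.2.
Qed.

Lemma sublinear_minimal_minorant (p : V -> R) : sublinear p -> exists f,
  [/\ sublinear f, forall x, f x <= p x &
      forall q, sublinear q -> (forall x, q x <= f x) -> forall x, f x <= q x].
Proof.
move=> hp; pose T := {q : V -> R | sublinear q /\ forall x, q x <= p x}.
pose above (a b : T) := `[< forall x, sval b x <= sval a x >].
have t0 : T by exists p; split=> // x; exact: lexx.
have [t tmax] : exists t, premaximal above t.
  apply: (ZL_preorder t0) => [a|a b c /asboolP ab /asboolP bc|A Atot].
  - by apply/asboolP => x; exact: lexx.
  - by apply/asboolP => x; exact: le_trans (bc x) (ab x).
  have [[a0 Aa0]|A0] := pselect (A !=set0); last first.
    by exists t0 => a Aa; exfalso; apply: A0; exists a.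
  have [|q [a Aa <-]|q1 q2 [a1 A1 <-] [a2 A2 <-]|m hm mA] :=
    @sublinear_chain_minorant p [set sval a | a in A].
  - by exists (sval a0), a0.
  - exact: (svalP a).
  - by have [/asboolP|/asboolP] := Atot _ _ A1 A2; [right|left].
  have mp x : m x <= p x := le_trans (mA _ (imageP _ Aa0) x) ((svalP a0).2 x).
  by exists (exist _ m (conj hm mp)) => a Aa; apply/asboolP => x; apply: mA; exists a.
have [hf fp] := svalP t; exists (sval t); split=> // q hq qf.
have qp x : q x <= p x := le_trans (qf x) (fp x).
by have /(_ _)/asboolP := tmax (exist _ q (conj hq qp)); apply; apply/asboolP.
Qed.

(* A minimal sublinear minorant of [cone_shift p v] is linear and agrees with [p] at [v]. *)
Theorem hahn_banach_sublinear (p : V -> R) (v : V) : sublinear p ->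
  exists f, [/\ scalar f, forall x, f x <= p x & f v = p v].
Proof.
move=> hp; have [f [hf fp fmin]] := sublinear_minimal_minorant (cone_shift_sublinear v hp).
have flin : scalar f.
  apply: scalar_of_cone_shift_min => // z x; apply: fmin => [|y].
    exact: cone_shift_sublinear.
  exact: cone_shift_le.
have fp' x : f x <= p x := le_trans (fp x) (cone_shift_le _ _ hp).
exists f; split=> //; have := fp (- v); have := cone_shift_opp v hp; have := fp' v.
by rewrite (scalar_funN flin); lra.
Qed.

End Sublinear.

Section PointwiseClosure.
Context {R : realType} {X : eqType}.

Lemma closure_ptws_le (K : set (X -> R)) (h : X -> R) (x : X) (b : R) :
  (forall k, K k -> k x <= b) -> @closure {ptws X -> R} K h -> h x <= b.
Proof.
move=> Kb Kh; rewrite leNgt; apply/negP => bh.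
have hxN : nbhs (h x) [set y : R | b < y] by apply: open_nbhs_nbhs; split=> //; exact: open_gt.
have [k [Kk /= bk]] := Kh _ (@proj_continuous X (fun _ => R) x h _ hxN).
by have := Kb k Kk; rewrite leNgt bk.
Qed.

Lemma ptws_cvg_pointwise (F : set_system (X -> R)) (h : X -> R) : Filter F ->
  (forall x, (fun k => k x) @ F --> h x) -> {ptws, F --> h}.
Proof.
move=> FF Fh.
pose Tx x := Topological.class (initial_topology (fun k : X -> R => k x)).
apply/(@cvg_sup _ _ Tx) => x.
apply/cvg_image; first by rewrite eqEsubset; split=> v // _; exists (cst v).
move=> W /Fh FW; exists ((fun k => k x) @^-1` W) => //.
by rewrite eqEsubset; split=> [_ [k Wk <-] //|v Wv]; exists (cst v).
Qed.

Lemma closure_ptws_approx (K : set (X -> R)) (h : X -> R) :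
  (forall (s : seq X) e, 0 < e -> exists2 k, K k & forall x, x \in s -> `|h x - k x| < e) ->
  @closure {ptws X -> R} K h.
Proof.
move=> Kapprox B hB.
pose close (p : seq X * R) := [set k | K k /\ forall x, x \in p.1 -> `|h x - k x| < p.2].
pose F := filter_from [set p : seq X * R | 0 < p.2] close.
have FF : Filter F.
  apply: filter_from_filter; first by exists ([::], 1); rewrite /= ltr01.
  move=> [s1 e1] [s2 e2] /= e10 e20.
  exists (s1 ++ s2, Num.min e1 e2); first by rewrite /= lt_min e10 e20.
  move=> k [Kk hk]; split; split=> // x xs; have := hk x; rewrite mem_cat xs ?orbT;
    by move=> /(_ isT); rewrite lt_min => /andP[].
have Fh : {ptws, F --> h}.
  apply: ptws_cvg_pointwise => x; apply/cvgrPdist_lt => e e0.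
  by exists ([:: x], e) => // k [_ hk]; apply: hk; rewrite inE.
have [[s e] /= e0 closeB] := Fh B hB.
have [k Kk hk] := Kapprox s e e0.
by exists k; split => //; apply: closeB.
Qed.

End PointwiseClosure.

Section ConeSeparation.
Context {R : realType} {X : lmodType R}.
Variable K : set (X -> R).
Hypotheses (K0 : K (fun=> 0))
  (KD : forall k1 k2, K k1 -> K k2 -> K (fun x => k1 x + k2 x))
  (KZ : forall t k, 0 < t -> K k -> K (fun x => t * k x))
  (Kscalar : forall k, K k -> scalar k).

Definition eval_row (s : seq X) (k : X -> R) : 'rV[R]_(size s) :=
  \row_i k (nth 0 s i).

Definition dist_row (s : seq X) (y : 'rV[R]_(size s)) (k : X -> R) :=
  \sum_i `|y 0 i - k (nth 0 s i)|.

Lemma dist_row_cone_sublinear (s : seq X) :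
  sublinear (fun y : 'rV_(size s) => inf [set dist_row y k | k in K]).
Proof.
apply: sublinear_inf => [y|y|y1 y2 _ _ [k1 K1 <-] [k2 K2 <-]|t y _ t0 [k Kk <-]].
- by exists 0 => _ [k _ <-]; apply: sumr_ge0.
- by exists (dist_row y (fun=> 0)), (fun=> 0).
- exists (dist_row (y1 + y2) (fun x => k1 x + k2 x)).
    by exists (fun x => k1 x + k2 x); [exact: KD|].
  rewrite /dist_row -big_split /=; apply: ler_sum => i _; rewrite mxE.
  by rewrite opprD addrACA; exact: ler_normD.
- exists (dist_row (t *: y) (fun x => t * k x)).
    by exists (fun x => t * k x); [exact: KZ|].
  rewrite /dist_row mulr_sumr le_eqVlt; apply/orP; left; apply/eqP; apply: eq_bigr => i _.
  by rewrite mxE -mulrBr normrM gtr0_norm.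
Qed.

Lemma scalar_eval_row (s : seq X) (L : 'rV[R]_(size s) -> R) : scalar L ->
  exists z, forall k, scalar k -> k z = L (eval_row s k).
Proof.
move=> hL; exists (\sum_(i < size s) L 'e_i *: nth 0 s i) => k hk.
rewrite (scalar_fun_sum hk) [in RHS](row_sum_delta (eval_row s k)) (scalar_fun_sum hL).
by apply: eq_bigr => i _; rewrite mxE mulrC.
Qed.

Lemma far_from_cone_separated (h : X -> R) (s : seq X) (e : R) :
  scalar h -> 0 < e -> (forall k, K k -> exists2 x, x \in s & e <= `|h x - k x|) ->
  exists z, (forall k, K k -> k z <= 0) /\ 0 < h z.
Proof.
move=> hh e0 far.
have [L [hL Lp Lh]] := hahn_banach_sublinear (eval_row s h) (dist_row_cone_sublinear s).
have dist_lbound y : has_lbound [set dist_row y k | k in K].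
  by exists 0 => _ [k _ <-]; apply: sumr_ge0.
have [z Lz] := scalar_eval_row hL; exists z; split=> [k Kk|].
- have dist0 : dist_row (eval_row s k) k = 0.
    by apply: big1 => i _; rewrite mxE subrr normr0.
  rewrite Lz; last exact: Kscalar.
  by apply: le_trans (Lp _) _; rewrite -dist0; apply: ge_inf => //; exists k.
- rewrite Lz // Lh; apply: lt_le_trans e0 _; apply: lb_le_inf => [|_ [k Kk <-]].
    by exists (dist_row (eval_row s h) (fun=> 0)), (fun=> 0).
  have [x xs ex] := far k Kk; have ix : (index x s < size s)%N by rewrite index_mem.
  apply: le_trans ex _; rewrite /dist_row (bigD1 (Ordinal ix)) //= mxE nth_index //.
  by rewrite lerDl; apply: sumr_ge0.
Qed.

Lemma closure_ptws_cone (h : X -> R) : scalar h ->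
  (forall z, (forall k, K k -> k z <= 0) -> h z <= 0) -> @closure {ptws X -> R} K h.
Proof.
move=> hh hK; apply: closure_ptws_approx => s e e0; apply: contrapT => nclose.
have [|z [Kz hz]] := far_from_cone_separated (s := s) hh e0.
  move=> k Kk; apply: contrapT => nfar; apply: nclose; exists k => // x xs.
  by rewrite ltNge; apply/negP => ex; apply: nfar; exists x.
by have := hK z Kz; rewrite leNgt hz.
Qed.

End ConeSeparation.

Section TvsNbhs.
Context {R : realType} {X : tvsType R}.

Lemma nbhs0_absorbing (U : set X) (x : X) : nbhs 0 U -> exists2 a, 1 <= a & U (a^-1 *: x).
Proof.
move=> U0; have /= := scale_continuous (0, x) U.
rewrite scale0r => /(_ U0)[] /= B [B1 B2] BU.
have [e /= e0 eB] := (nbhs_ballP _ _).1 B1.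
pose t := Num.min (e / 2) 1.
have t0 : 0 < t by rewrite lt_min ltr01 andbT divr_gt0.
have te : t < e by rewrite gt_min; apply/orP; left; lra.
exists t^-1; first by rewrite invf_ge1 // ge_min lexx orbT.
rewrite invrK; apply: (BU (t, x)); split=> /=; last exact: nbhs_singleton.
by apply: eB; rewrite -ball_normE /= sub0r normrN gtr0_norm.
Qed.

Lemma convex_symmetric_nbhs0 (W : set X) : nbhs 0 W -> exists V : set X,
  [/\ nbhs 0 V, V `<=` W,
      forall u w l, V u -> V w -> 0 <= l -> l <= 1 -> V (l *: u + (1 - l) *: w)
    & forall v, V v -> V (- v)].
Proof.
move=> W0; have [B Bconvex Bbase] := @locally_convex R X.
have [C [BC C0] CW] := Bbase.2 0 W W0.
have convC u w l : C u -> C w -> 0 <= l -> l <= 1 -> C (l *: u + (1 - l) *: w).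
  move=> Cu Cw l0 l1; have := Bconvex C (mem_set BC) u w (Itv01 l0 l1).
  by rewrite !inE => /(_ Cu Cw).
have nC : nbhs 0 C by apply: open_nbhs_nbhs; split=> //; exact: Bbase.1.
exists [set v | C v /\ C (- v)]; split.
- apply: filterS (filterI nC (nbhs0N nC)) => v [Cv [u Cu uv]].
  by split=> //; rewrite -uv opprK.
- by move=> v [Cv _]; exact: CW.
- move=> u w l [Cu Cu'] [Cw Cw'] l0 l1; split; first exact: convC.
  by rewrite opprD -!scalerN; exact: convC.
- by move=> v [Cv Cv']; split; rewrite ?opprK.
Qed.

Lemma scalar_continuous_ubound (f : X -> R) (V : set X) (c : R) :
  scalar f -> nbhs 0 V -> (forall v, V v -> f v <= c) -> forall x, continuous_at x f.
Proof.
move=> hf V0 fc x; apply/cvgrPdist_lt => e e0.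
have c0 : 0 <= c by rewrite -(scalar_fun0 hf); exact: fc (nbhs_singleton V0).
pose d := e / (c + 1).
have d0 : 0 < d by rewrite divr_gt0 // ltr_wpDl.
have dc : d * c < e by rewrite /d mulrAC ltr_pdivrMr ?ltr_wpDl ?ltr_pM2l //; lra.
have Vd : nbhs 0 ( *:%R d @` (V `&` (-%R @` V))).
  by apply: nbhs0Z; rewrite ?gt_eqF //; apply: filterI => //; exact: nbhs0N.
apply: filterS (nbhsT x Vd) => _ [_ [v [Vv [w Vw wv]] <-] <-].
rewrite /= (scalar_funD hf) opprD addNKr (scalar_funZ hf) normrN ltr_norml.
apply/andP; split.
- by rewrite -wv (scalar_funN hf) mulrN ltrN2; apply: le_lt_trans dc; rewrite ler_pM2l ?fc.
- by apply: le_lt_trans dc; rewrite ler_pM2l ?fc.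
Qed.

End TvsNbhs.

Section Regularization.
Context {R : realType} {X : tvsType R}.
Variables (g : X -> \bar R) (V : set X) (c : R).
Hypotheses (gN : forall x, g x != -oo%E) (gs : esublinear g) (g0 : g 0 = 0%E)
  (V0 : nbhs 0 V)
  (Vconvex : forall u w l, V u -> V w -> 0 <= l -> l <= 1 -> V (l *: u + (1 - l) *: w))
  (VN : forall v, V v -> V (- v))
  (gV : forall v, V v -> ((-1)%:E < g v)%E)
  (c1 : 1 <= c).

Let c0 : 0 < c := lt_le_trans ltr01 c1.

(* [regularize x] is the inf-convolution of [g] with [c] times the gauge of [V]:
   the infimum of [g y + c s] over [y] and [s > 0] with [x - y] in [s V]. *)
Definition regularize_set (x : X) : set R :=
  [set z | exists y s, [/\ 0 < s, V (s^-1 *: (x - y)) & (g y <= (z - c * s)%:E)%E]].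

Definition regularize (x : X) : R := inf (regularize_set x).

Lemma scaled_nbhs_add s1 s2 u w : 0 < s1 -> 0 < s2 ->
  V (s1^-1 *: u) -> V (s2^-1 *: w) -> V ((s1 + s2)^-1 *: (u + w)).
Proof.
move=> s10 s20 Vu Vw; have s12 : s1 + s2 != 0 by rewrite gt_eqF ?addr_gt0.
have l0 : 0 <= s1 / (s1 + s2) by rewrite divr_ge0 ?addr_ge0 ?ltW.
have l1 : s1 / (s1 + s2) <= 1 by rewrite ler_pdivrMr ?addr_gt0 // mul1r lerDl ltW.
have := Vconvex Vu Vw l0 l1; congr V; rewrite !scalerA scalerDr; congr (_ *: _ + _ *: _).
  by field; rewrite s12 gt_eqF.
by field; rewrite s12 gt_eqF.
Qed.

Lemma scaled_nbhs_le1 s u : 0 < s -> s <= 1 -> V (s^-1 *: u) -> V u.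
Proof.
move=> s0 s1 Vu; have := Vconvex Vu (nbhs_singleton V0) (ltW s0) s1.
by rewrite scalerA divff ?gt_eqF // scale1r scaler0 addr0.
Qed.

Lemma g_gt_scaled_nbhs s y : 0 < s -> V (s^-1 *: y) -> ((- s)%:E < g y)%E.
Proof.
move=> s0 Vy; have si0 : 0 < s^-1 by rewrite invr_gt0.
have := gV Vy; rewrite gs.1 //; case: (g y) (gN y) => [G| |] //= _; last by rewrite ltry.
by rewrite -EFinM !lte_fin => h; rewrite -(ltr_pM2l si0) mulrN mulVf ?gt_eqF.
Qed.

Lemma regularize_set_gt x a y s z : 0 < a -> V (a^-1 *: x) -> 0 < s ->
  V (s^-1 *: (x - y)) -> (g y <= (z - c * s)%:E)%E -> c * s - (a + s) < z.
Proof.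
move=> a0 Vx s0 Vxy gy.
have Vyx : V (s^-1 *: (y - x)) by rewrite -opprB scalerN; exact: VN.
have := scaled_nbhs_add a0 s0 Vx Vyx; rewrite subrKC => Vy.
by have := lt_le_trans (g_gt_scaled_nbhs (addr_gt0 a0 s0) Vy) gy; rewrite lte_fin; lra.
Qed.

Lemma regularize_set_lbound x : has_lbound (regularize_set x).
Proof.
have [a a1 Va] := nbhs0_absorbing x V0; have a0 : 0 < a by exact: lt_le_trans a1.
exists (- a) => z [y [s [s0 Vxy gy]]].
have : 0 <= (c - 1) * s by rewrite mulr_ge0 ?subr_ge0 // ltW.
by have := regularize_set_gt a0 Va s0 Vxy gy; lra.
Qed.

Lemma regularize_set_gauge s v : 0 < s -> V (s^-1 *: v) -> regularize_set v (c * s).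
Proof. by move=> s0 Vv; exists 0, s; rewrite subr0 g0 subrr. Qed.

Lemma regularize_sublinear : sublinear regularize.
Proof.
apply: sublinear_inf => [x|x|x1 x2 z1 z2|t x z t0].
- exact: regularize_set_lbound.
- have [a a1 Va] := nbhs0_absorbing x V0.
  by exists (c * a); apply: regularize_set_gauge; first exact: lt_le_trans a1.
- move=> [y1 [s1 [s10 V1 g1]]] [y2 [s2 [s20 V2 g2]]]; exists (z1 + z2) => //.
  exists (y1 + y2), (s1 + s2); split; first exact: addr_gt0.
    by rewrite opprD addrACA; exact: scaled_nbhs_add.
  apply: le_trans (gs.2 _ _) _; apply: le_trans (leeD g1 g2) _.
  by rewrite -EFinD lee_fin mulrDr; lra.
- move=> [y [s [s0 Vxy gy]]]; exists (t * z) => //.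
  exists (t *: y), (t * s); split; first exact: mulr_gt0.
    by rewrite -scalerBr scalerA invfM mulrAC mulVf ?gt_eqF // mul1r.
  rewrite gs.1 //; apply: le_trans (lee_wpmul2l _ gy) _; first by rewrite lee_fin ltW.
  by rewrite -EFinM lee_fin mulrBr mulrCA.
Qed.

Lemma regularize_le x : ((regularize x)%:E <= g x)%E.
Proof.
case gx : (g x) => [G| |]; [|exact: leey|by have := gN x; rewrite gx].
rewrite lee_fin; apply/ler_addgt0Pr => e e0; apply: ge_inf; first exact: regularize_set_lbound.
exists x, (e / c); rewrite subrr scaler0 gx; split; first by rewrite divr_gt0.
  exact: nbhs_singleton.
by rewrite lee_fin mulrC divfK ?gt_eqF // addrK.
Qed.

Lemma regularize_le_c v : V v -> regularize v <= c.
Proof.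
move=> Vv; rewrite -[c]mulr1; apply: ge_inf; first exact: regularize_set_lbound.
by apply: regularize_set_gauge; rewrite ?invr1 ?scale1r.
Qed.

Lemma regularize_ge x0 r a : 0 < a -> V (a^-1 *: x0) -> a + `|r| + 1 <= c ->
  (forall v, V v -> (r%:E < g (x0 + v)%R)%E) -> r <= regularize x0.
Proof.
move=> a0 Vx0 ca gr; apply: lb_le_inf => [|z [y [s [s0 Vxy gy]]]].
  have [b b1 Vb] := nbhs0_absorbing x0 V0.
  by exists (c * b); apply: regularize_set_gauge; first exact: lt_le_trans b1.
have [s1|s1] := leP s 1.
- have Vyx : V (y - x0) by rewrite -opprB; exact/VN/(scaled_nbhs_le1 s0 s1).
  have := gr _ Vyx; rewrite subrKC => /lt_le_trans/(_ gy); rewrite lte_fin.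
  have : 0 <= c * s by rewrite mulr_ge0 // ltW.
  lra.
- have : 0 <= (c - (a + `|r| + 1)) * s by apply: mulr_ge0; rewrite ?subr_ge0 // ltW.
  have : 0 <= (a + `|r|) * (s - 1).
    by apply: mulr_ge0; [rewrite addr_ge0 // ltW | rewrite subr_ge0 ltW].
  by have := regularize_set_gt a0 Vx0 s0 Vxy gy; have := ler_norm r; lra.
Qed.

End Regularization.

Section LscSublinear.
Context {R : realType} {X : tvsType R}.
Variable g : X -> \bar R.
Hypotheses (gN : forall x, g x != -oo%E) (gfin : exists x, g x != +oo%E)
  (glsc : lower_semicontinuous g) (gs : esublinear g).

(* Homogeneity leaves [g 0] in {0, +oo}; lower semicontinuity at [0] and a point of finiteness
   exclude [+oo]. *)
Lemma esublinear0 : g 0 = 0%E.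
Proof.
have := gs.1 2 0 (ltr0Sn _ 1); rewrite scaler0.
case g0 : (g 0) (gN 0) => [G| |] // _.
  by move/eqP; rewrite -EFinM eqe => /eqP e; congr _%:E; lra.
move=> _; exfalso; have [x1] := gfin; case g1 : (g x1) (gN x1) => [G| |] // _ _.
have [U U0 gU] := @glsc 0 (`|G| + 1) ltac:(by rewrite g0 ltry).
have [a a1 Ux1] := nbhs0_absorbing x1 U0; have a0 : 0 < a := lt_le_trans ltr01 a1.
have := gU _ Ux1; rewrite gs.1 ?invr_gt0 // g1 -EFinM lte_fin.
have : a^-1 * G <= `|G|.
  apply: le_trans (ler_norm _) _.
  by rewrite normrM gtr0_norm ?invr_gt0 // ler_piMl // invf_le1.
lra.
Qed.

Lemma esublinear_addN_ge0 x : (0 <= g x + g (- x)%R)%E.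
Proof. by have := gs.2 x (- x); rewrite subrr esublinear0. Qed.

(* Hahn-Banach applied to a regularization of [g] that is bounded above near [0]: that bound makes
   the resulting linear minorant continuous. *)
Lemma subdiff0_gt x0 r : (r%:E < g x0)%E -> exists2 f, subdiff0 g f & r < f x0.
Proof.
move=> rx0; have g0 := esublinear0.
have [r' rr' r'x0] : exists2 r', r < r' & (r'%:E < g x0)%E.
  case: (g x0) rx0 => [G| |] //= rG; last by exists (r + 1); [lra | rewrite ltry].
  by exists ((r + G) / 2); move: rG; rewrite !lte_fin; lra.
have [U1 U10 gU1] := @glsc 0 (-1) ltac:(by rewrite g0 lte_fin ltrN10).
have [U2 U2x0 gU2] := @glsc x0 r' r'x0.
have W0 : nbhs 0 (U1 `&` [set v | U2 (x0 + v)]).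
  apply: filterI => //; have := nbhsB (- x0) U2x0; rewrite addNr.
  by apply: filterS => _ [u Uu <-]; rewrite /= addrA subrr add0r.
have [V [V0 VW Vconvex VN]] := convex_symmetric_nbhs0 W0.
have gV v : V v -> ((-1)%:E < g v)%E by move=> /VW [/gU1].
have [a a1 Vx0] := nbhs0_absorbing x0 V0; have a0 : 0 < a := lt_le_trans ltr01 a1.
have c1 : 1 <= a + `|r'| + 1 by have := normr_ge0 r'; lra.
have hq := regularize_sublinear gN gs g0 V0 Vconvex VN gV c1.
have [f [hf fq fx0]] := hahn_banach_sublinear x0 hq.
exists f; first split; first split => //.
- apply: (scalar_continuous_ubound hf V0) => v Vv; apply: le_trans (fq v) _.
  exact: (regularize_le_c gN gs g0 V0 Vconvex VN gV c1).
- move=> x; apply: le_trans (regularize_le gN gs V0 Vconvex VN gV c1 x); by rewrite lee_fin.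
- rewrite fx0; apply: lt_le_trans rr' _.
  apply: (regularize_ge gN gs g0 V0 Vconvex VN gV c1 a0 Vx0) => // v.
  by move=> /VW [_ /gU2].
Qed.

Lemma subdiff0_nonempty : subdiff0 g !=set0.
Proof.
by have [|f Sf _] := @subdiff0_gt 0 (-1); [rewrite esublinear0 lte_fin ltrN10 | exists f].
Qed.

End LscSublinear.

Lemma le_addeN_eq {R : realDomainType} (u v : \bar R) (a : R) :
  (u <= a%:E)%E -> (v <= (- a)%:E)%E -> (0 <= u + v)%E -> u = a%:E /\ v = (- a)%:E.
Proof.
case: u => [u| |]; case: v => [v| |] //=; rewrite ?lee_fin ?leeNy_eq //.
by move=> ua va uv; split; congr _%:E; lra.
Qed.

Section ConvexCones.
Context {R : realType} {X : tvsType R}.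

Definition convex_cone (C : set X) :=
  [/\ C 0, forall x y, C x -> C y -> C (x + y) & forall t x, 0 < t -> C x -> C (t *: x)].

Lemma convex_cone_linear C : convex_cone C -> (forall x, C x -> C (- x)) ->
  is_linear_subspace C.
Proof.
move=> [C0 CD CZ] CN; split=> // t x Cx.
have [t0|t0|->] := ltgtP t 0; last by rewrite scale0r.
- by rewrite -[t]opprK scaleNr -scalerN; apply: CZ; rewrite ?oppr_gt0 //; exact: CN.
- exact: CZ.
Qed.

Lemma convex_cone_symmetric C : convex_cone C -> convex_cone [set x | C x /\ C (- x)].
Proof.
move=> [C0 CD CZ]; split=> [|x y [Cx Cx'] [Cy Cy']|t x t0 [Cx Cx']].
- by split; rewrite ?oppr0.
- by split; [exact: CD | rewrite opprD; exact: CD].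
- by split; [exact: CZ | rewrite -scalerN; exact: CZ].
Qed.

Lemma linear_subspaceN (C : set X) x : is_linear_subspace C -> C x -> C (- x).
Proof. by move=> [_ _ CZ] Cx; rewrite -scaleN1r; exact: CZ. Qed.

End ConvexCones.

Section Dual.
Context {R : realType} {X : tvsType R}.

Lemma cont_dual_lincomb a b (f1 f2 : X -> R) : cont_dual f1 -> cont_dual f2 ->
  cont_dual (fun x => a * f1 x + b * f2 x).
Proof.
move=> [l1 c1] [l2 c2]; split=> [t x y|x]; first by rewrite l1 l2; ring.
by apply: cvgD; apply: cvgM; [exact: cvg_cst | exact: c1 | exact: cvg_cst | exact: c2].
Qed.

Lemma cont_dual_scaleB t (f1 f2 : X -> R) : cont_dual f1 -> cont_dual f2 ->
  cont_dual (fun x => t * (f1 x - f2 x)).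
Proof.
move=> c1 c2; have := cont_dual_lincomb t (- t) c1 c2; congr cont_dual.
by apply/funext => x; ring.
Qed.

Lemma cont_dual0 : cont_dual (fun _ : X => 0 : R).
Proof. by split=> [a x y|x]; [rewrite mulr0 addr0 | exact: cvg_cst]. Qed.

Lemma polar_dual_linear_subspace (C : set X) : (forall x, C x -> C (- x)) ->
  dual_linear_subspace [set h | cont_dual h /\ forall x, C x -> h x <= 0].
Proof.
move=> CN.
have polar0 h : cont_dual h -> (forall x, C x -> h x <= 0) -> forall x, C x -> h x = 0.
  move=> hh hC x Cx; apply/eqP; rewrite eq_le hC //=.
  by have := hC _ (CN _ Cx); rewrite (scalar_funN hh.1) oppr_le0.
split=> [|f h [cf fC] [ch hC]|a f [cf fC]].
- by split=> [|x _]; [exact: cont_dual0 | exact: lexx].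
- split=> [|x Cx]; last by rewrite (polar0 f cf fC x Cx) (polar0 h ch hC x Cx) addr0.
  by have := cont_dual_lincomb 1 1 cf ch; congr cont_dual; apply/funext => x; rewrite !mul1r.
- split=> [|x Cx]; last by rewrite (polar0 f cf fC x Cx) mulr0.
  by have := cont_dual_lincomb a 0 cf cf; congr cont_dual; apply/funext => x; rewrite mul0r addr0.
Qed.

End Dual.

Section ConeAt.
Context {R : realType} {X : tvsType R}.
Variables (B : set (X -> R)) (b : X -> R).

Lemma cone_at0 : B !=set0 -> cone_at B b (fun=> 0).
Proof.
by move=> [c Bc]; exists 0; split=> //; exists c => //; apply/funext => x; rewrite mul0r.
Qed.

Lemma cone_atZ t k : 0 < t -> cone_at B b k -> cone_at B b (fun x => t * k x).
Proof.
move=> t0 [s [s0 [c Bc ->]]]; exists (t * s); split; first by rewrite mulr_ge0 // ltW.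
by exists c => //; apply/funext => x; rewrite mulrA.
Qed.

Lemma cone_atD k1 k2 :
  (forall f1 f2 l, B f1 -> B f2 -> 0 <= l -> l <= 1 ->
    B (fun x => l * f1 x + (1 - l) * f2 x)) ->
  cone_at B b k1 -> cone_at B b k2 -> cone_at B b (fun x => k1 x + k2 x).
Proof.
move=> Bconvex [s1 [s10 [c1 Bc1 ->]]] [s2 [s20 [c2 Bc2 ->]]].
have [s12|s12] := eqVneq (s1 + s2) 0.
  have [-> ->] : s1 = 0 /\ s2 = 0 by move: s12 => /eqP; lra.
  by exists 0; split=> //; exists c1 => //; apply/funext => x; rewrite !mul0r addr0.
have s12p : 0 < s1 + s2 by rewrite lt_neqAle eq_sym s12 addr_ge0.
have l0 : 0 <= s1 / (s1 + s2) by rewrite divr_ge0 // ltW.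
have l1 : s1 / (s1 + s2) <= 1 by rewrite ler_pdivrMr // mul1r lerDl.
exists (s1 + s2); split; first exact: ltW.
exists (fun x => s1 / (s1 + s2) * c1 x + (1 - s1 / (s1 + s2)) * c2 x); first exact: Bconvex.
by apply/funext => x; field.
Qed.

Lemma cone_at_scalar k : (forall c, B c -> scalar c) -> scalar b -> cone_at B b k -> scalar k.
Proof.
move=> Bscalar hb [s [_ [c /Bscalar hc ->]]] a x y.
by rewrite (scalar_funD hc) (scalar_funZ hc) (scalar_funD hb) (scalar_funZ hb); ring.
Qed.

End ConeAt.

Lemma subdiff0_convex {R : realType} {X : tvsType R} (g : X -> \bar R) f1 f2 l :
  subdiff0 g f1 -> subdiff0 g f2 -> 0 <= l -> l <= 1 ->
  subdiff0 g (fun x => l * f1 x + (1 - l) * f2 x).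
Proof.
move=> [c1 g1] [c2 g2] l0 l1; split=> [|x]; first exact: cont_dual_lincomb.
move: (g1 x) (g2 x); case: (g x) => [G| |]; rewrite ?leey ?leeNy_eq // !lee_fin => h1 h2.
have : (1 - l) * f2 x <= (1 - l) * G by rewrite ler_wpM2l ?subr_ge0.
have : l * f1 x <= l * G by rewrite ler_wpM2l.
lra.
Qed.

Section QriSubdiff0.
Context {R : realType} {X : tvsType R}.
Variable g : X -> \bar R.
Hypotheses (gN : forall x, g x != -oo%E) (gfin : exists x, g x != +oo%E)
  (glsc : lower_semicontinuous g) (gs : esublinear g).
Variable xs : X -> R.
Hypothesis hxs : cont_dual xs.

Local Notation S := (subdiff0 g).
Local Notation Le := (g_le_set g xs).

Lemma g_le_set_cone : convex_cone Le.
Proof.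
split=> [|x y Lx Ly|t x t0 Lx]; rewrite /g_le_set /=.
- by rewrite esublinear0 // (scalar_fun0 hxs.1).
- by rewrite (scalar_funD hxs.1) EFinD; apply: le_trans (gs.2 x y) (leeD Lx Ly).
- by rewrite gs.1 // (scalar_funZ hxs.1) EFinM lee_wpmul2l // lee_fin ltW.
Qed.

Lemma Lset_g_le_set : Lset g xs = [set x | Le x /\ Le (- x)].
Proof.
apply/seteqP; split=> x; rewrite /Lset /g_le_set /= (scalar_funN hxs.1).
- by move=> [-> ->].
- by move=> [Lx LNx]; apply: le_addeN_eq Lx LNx (esublinear_addN_ge0 gN gfin glsc gs x).
Qed.

Lemma Lset_linear : is_linear_subspace (Lset g xs).
Proof.
rewrite Lset_g_le_set; apply: convex_cone_linear.
  exact/convex_cone_symmetric/g_le_set_cone.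
by move=> x [Lx LNx]; split; rewrite ?opprK.
Qed.

Lemma g_le_set_linearE : is_linear_subspace Le <-> Lset g xs = Le.
Proof.
split=> [LeL|<-]; last exact: Lset_linear.
rewrite Lset_g_le_set; apply/seteqP; split=> [x [] //|x Lx].
by split=> //; exact: linear_subspaceN.
Qed.

Lemma subdiff0_g_le_set_linear : is_linear_subspace Le -> S xs.
Proof.
move=> /g_le_set_linearE LLe; split=> // x; have [gx|gx] := leP (g x) (xs x)%:E.
- by have [-> _] : Lset g xs x by rewrite LLe.
- exact: ltW.
Qed.

Lemma g_le_set_eq_set : S xs -> Le = g_eq_set g xs.
Proof.
move=> [_ Sxs]; apply/seteqP; split=> x; rewrite /g_le_set /g_eq_set /=.
- by move=> gx; apply/eqP; rewrite eq_le gx Sxs.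
- by move=> ->.
Qed.

Lemma g_le_setE x : Le x <-> forall c, S c -> c x <= xs x.
Proof.
split=> [Lx c [_ cg]|Sx]; first by rewrite -lee_fin; exact: le_trans (cg x) Lx.
rewrite /g_le_set /= leNgt; apply/negP => /(subdiff0_gt gN gfin glsc gs) [c Sc].
by rewrite ltNge Sx.
Qed.

Lemma wstar_closure_cone_at :
  wstar_closure (cone_at S xs) = [set h | cont_dual h /\ forall x, Le x -> h x <= 0].
Proof.
apply/seteqP; split=> h [ch hcl]; split=> //.
- move=> x /g_le_setE Sx; apply: closure_ptws_le hcl => _ [t [t0 [c Sc ->]]].
  by rewrite mulr_ge0_le0 // subr_le0; exact: Sx.
- have K0 := cone_at0 xs (subdiff0_nonempty gN gfin glsc gs).
  have KD k1 k2 := @cone_atD _ _ S xs k1 k2 (@subdiff0_convex _ _ g).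
  have KZ t k := @cone_atZ _ _ S xs t k.
  have Kscalar k := @cone_at_scalar _ _ S xs k (fun c Sc => Sc.1.1) hxs.1.
  apply: (closure_ptws_cone K0 KD KZ Kscalar ch.1) => z Kz.
  apply: hcl; apply/g_le_setE => c Sc.
  have := Kz (fun x => 1 * (c x - xs x)); rewrite mul1r subr_le0; apply.
  by exists 1; split=> //; exists c.
Qed.

Lemma qri_subdiff0E : qri S xs <-> is_linear_subspace Le.
Proof.
split=> [[_ [_ _ closureZ]]|LeL].
- apply: convex_cone_linear; first exact: g_le_set_cone.
  move=> x Lx; apply/g_le_setE => c Sc.
  have k_cl : wstar_closure (cone_at S xs) (fun x => 1 * (c x - xs x)).
    split; first exact: cont_dual_scaleB Sc.1 hxs.
    by apply: subset_closure; exists 1; split=> //; exists c.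
  move: (closureZ (-1) _ k_cl); rewrite wstar_closure_cone_at => -[_ /(_ x Lx)].
  by rewrite (scalar_funN Sc.1.1) (scalar_funN hxs.1) mulN1r mul1r oppr_le0 subr_ge0 lerN2.
- split; first exact: subdiff0_g_le_set_linear.
  rewrite wstar_closure_cone_at; apply: polar_dual_linear_subspace => x.
  exact: linear_subspaceN.
Qed.

End QriSubdiff0.

Theorem proposition5 (R : realType) (X : tvsType R)
  (hX : hausdorff_space X) (ntX : exists x : X, x != 0)
  (g : X -> \bar R)
  (gp : proper_fun g) (glsc : lower_semicontinuous g) (gc : econvex g)
  (gs : esublinear g)
  (xs : X -> R) (hxs : cont_dual xs) :
  [/\ qri (subdiff0 g) xs <-> is_linear_subspace (g_le_set g xs),
      qri (subdiff0 g) xs <-> Lset g xs = g_le_set g xs,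
      qri (subdiff0 g) xs <->
        (subdiff0 g xs /\ is_linear_subspace (g_eq_set g xs)) &
      qri (subdiff0 g) xs <->
        (subdiff0 g xs /\ Lset g xs = g_eq_set g xs)].
Proof.
(* Convexity follows from sublinearity. *)
have [gN gfin] := gp.
have qriE := qri_subdiff0E gN gfin glsc gs hxs.
have LE := g_le_set_linearE gN gfin glsc gs hxs.
have Sxs := subdiff0_g_le_set_linear gN gfin glsc gs hxs.
have EqE := @g_le_set_eq_set _ _ g xs.
split; first exact: qriE.
- by split=> [/qriE/LE|/LE/qriE].
- split=> [/qriE LeL|[Sx EqL]]; last by apply/qriE; rewrite EqE.
  by split; [exact: Sxs | rewrite -(EqE (Sxs LeL))].
- split=> [/qriE LeL|[Sx LEq]]; last by apply/qriE/LE; rewrite LEq EqE.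
  by split; [exact: Sxs | rewrite -(EqE (Sxs LeL)); apply/LE].
Qed.
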